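(* Suppose the jobs are indexed so that $d_1\le d_2\le\dots\le d_n$. Let $\sigma$ be a proper schedule and $\sigma'$ the intermediate schedule obtained from $\sigma$ by an admissible swap at some step $j^*$ between machines $M_h$ and $M_i$. Then $L_{\max}(\sigma')\le L_{\max}(\sigma)$, where $L_{\max}(\tau)=\max_{j\in J}(C_j(\tau)-d_j)$.
   Context: Jobs $J=\{1,\dots,n\}$, job $j$ with positive integer processing time $p_j$ and integer due date $d_j$, are scheduled non-preemptively on $m$ identical machines $M_1,\dots,M_m$; $p_{\max}=\max_j p_j$, $P(X)=\sum_{j\in X}p_j$. A proper schedule $\sigma$ is a partition $J=J_1(\sigma)\cup\dots\cup J_m(\sigma)$, the jobs of $J_i(\sigma)$ processed on $M_i$ consecutively from time $0$ without idle time in increasing index order; $C_j(\sigma)$ is the completion time of $j$. $J_j=\{1,\dots,j\}$, $J_{i,j}(\sigma)=J_i(\sigma)\cap J_j$, $\Delta_{h,i,j}(\sigma)=P(J_{h,j}(\sigma))-P(J_{i,j}(\sigma))$. The swap: admissible for proper $\sigma$ at step $j^*$ with machines $M_h,M_i$ if $j^*\in J_h(\sigma)$, $|J_i(\sigma)\setminus J_{i,j^*}(\sigma)|\ge 2p_{\max}$, and $\Delta_{h,i,j^*}(\sigma)\ge 4p_{\max}^2$. Let $J_I$ be the first (smallest-index) $2p_{\max}$ jobs of $J_i(\sigma)\setminus J_{i,j^*}(\sigma)$ and $J_H$ the last (largest-index) $2p_{\max}$ jobs of $J_{h,j^*}(\sigma)$; choose non-empty $J_{H'}\subseteq J_H$,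 $J_{I'}\subseteq J_I$ with $P(J_{H'})=P(J_{I'})$. The intermediate schedule $\sigma'$: on $M_h$ the time interval occupied by $J_H$ in $\sigma$ is filled by $J_H\setminus J_{H'}$ then $J_{I'}$; on $M_i$ the interval occupied by $J_I$ is filled by $J_{H'}$ then $J_I\setminus J_{I'}$ (each group in its order in $\sigma$); all other jobs keep their positions. *)

(* Jobs are 'I_n (job j of the paper is the ordinal j-1, so
   the index order is preserved); machines are 'I_m. *)
From mathcomp Require Import all_boot all_order all_algebra.
Set Implicit Arguments. Unset Strict Implicit. Unset Printing Implicit Defensive.
Import Order.TTheory GRing.Theory Num.Theory.

Section Sched.
Variables (n m : nat) (p : 'I_n -> nat).

Definition pmax : nat := \max_(j < n) p j.
Definition Pset (X : {set 'I_n}) : nat := \sum_(j in X) p j.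
Definition Pseq (s : seq 'I_n) : nat := \sum_(j <- s) p j.

(* A general (not necessarily proper) schedule: for each machine, the sequence
   of jobs it processes consecutively from time 0 without idle time. *)
Definition ctime (s : 'I_m -> seq 'I_n) (j : 'I_n) : nat :=
  \sum_(i < m | j \in s i) Pseq (take (index j (s i)).+1 (s i)).

(* max of a nonempty list of integers (0 for the empty list, irrelevant) *)
Definition seqmax (s : seq int) : int :=
  if s is x :: s' then foldl Num.max x s' else 0%R.

Definition Lmax (d : 'I_n -> int) (s : 'I_m -> seq 'I_n) : int :=
  seqmax [seq ((ctime s j)%:Z - d j)%R | j <- enum 'I_n].

(* A proper schedule is given by the partition J = J_1 u ... u J_m,
   encoded by the machine assignment a : 'I_n -> 'I_m. *)
Definition Jm (a : 'I_n -> 'I_m) (i : 'I_m) : {set 'I_n} := [set j | a j == i].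
Definition Jij (a : 'I_n -> 'I_m) (i : 'I_m) (j : 'I_n) : {set 'I_n} :=
  [set k | (a k == i) && (k <= j)].
(* the proper schedule as machine sequences: increasing index order *)
Definition proper_seq (a : 'I_n -> 'I_m) (i : 'I_m) : seq 'I_n := enum (Jm a i).

Definition Delta (a : 'I_n -> 'I_m) (h i : 'I_m) (j : 'I_n) : int :=
  ((Pset (Jij a h j))%:Z - (Pset (Jij a i j))%:Z)%R.

Definition Jafter (a : 'I_n -> 'I_m) (i : 'I_m) (js : 'I_n) : {set 'I_n} :=
  [set k | (a k == i) && (js < k)].

Definition admissible (a : 'I_n -> 'I_m) (js : 'I_n) (h i : 'I_m) : Prop :=
  [/\ a js = h,
      2 * pmax <= #|Jafter a i js| &
      ((4 * pmax ^ 2)%:Z <= Delta a h i js)%R].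

Definition JI (a : 'I_n -> 'I_m) (js : 'I_n) (i : 'I_m) : seq 'I_n :=
  take (2 * pmax) (enum (Jafter a i js)).
Definition JH (a : 'I_n -> 'I_m) (js : 'I_n) (h : 'I_m) : seq 'I_n :=
  let s := enum (Jij a h js) in drop (size s - 2 * pmax) s.

Definition intermediate (a : 'I_n -> 'I_m) (js : 'I_n) (h i : 'I_m)
    (H' I' : {set 'I_n}) (k : 'I_m) : seq 'I_n :=
  let sh := proper_seq a h in
  let si := proper_seq a i in
  let jH := JH a js h in
  let jI := JI a js i in
  if k == h then
    [seq j : 'I_n <- sh | (j <= js) && (j \notin jH)]
    ++ [seq j : 'I_n <- jH | j \notin H'] ++ [seq j : 'I_n <- jI | j \in I']
    ++ [seq j : 'I_n <- sh | js < j]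
  else if k == i then
    [seq j : 'I_n <- si | j <= js]
    ++ [seq j : 'I_n <- jH | j \in H'] ++ [seq j : 'I_n <- jI | j \notin I']
    ++ [seq j : 'I_n <- si | (js < j) && (j \notin jI)]
  else proper_seq a k.

End Sched.

From mathcomp Require Import all_boot all_order all_algebra.
From mathcomp Require Import zify.
Import Order.TTheory GRing.Theory Num.Theory.
Set Implicit Arguments. Unset Strict Implicit. Unset Printing Implicit Defensive.

(* Every job j of the intermediate schedule completes no later than some job
   k <= j completes in the proper schedule; since due dates are sorted,
   d_k <= d_j, so no lateness increases.  Jobs that keep their machine are
   preceded by at most as much work as before, because the exchanged blocks
   J_H' and J_I' have equal length; for the same reason a job of J_I' moved to
   M_h finishes by P(J_{h,j*}) = C_{j*}.  The remaining jobs, those of J_H'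
   moved to M_i and those of J_I left on M_i, finish by P(J_{i,j*}) + P(J_H)
   + P(J_I) <= P(J_{i,j*}) + 4 p_max^2 (each block has at most 2 p_max jobs),
   and the gap Delta_{h,i,j*} >= 4 p_max^2 keeps this below C_j resp. C_{j*};
   for a job j of J_H, C_j >= P(J_{h,j*}) - P(J_H). *)

Local Notation ord_lt n := (fun x y : 'I_n => x < y).

Section PrefixSums.
Variables (n : nat) (p : 'I_n -> nat).

Definition upto (j : 'I_n) (s : seq 'I_n) : seq 'I_n := take (index j s).+1 s.

Lemma ord_lt_trans : transitive (ord_lt n).
Proof. by move=> y x z; apply: ltn_trans. Qed.

Lemma sorted_enum_set (A : {set 'I_n}) : sorted (ord_lt n) (enum A).
Proof.
have -> : enum A = filter (mem A) (enum 'I_n) by rewrite enumT.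
apply: sorted_filter; first exact: ord_lt_trans.
by have := iota_ltn_sorted 0 n; rewrite -val_enum_ord sorted_map.
Qed.

Lemma upto_cat_in u v j : j \in u -> upto j (u ++ v) = upto j u.
Proof.
move=> ju; rewrite /upto index_cat ju take_cat.
have : index j u < size u by rewrite index_mem.
rewrite leq_eqVlt => /orP[/eqP E|->] //.
by rewrite E ltnn subnn take0 cats0 take_oversize // E.
Qed.

Lemma upto_cat_notin u v j : j \notin u -> upto j (u ++ v) = u ++ upto j v.
Proof.
move=> ju; rewrite /upto index_cat (negbTE ju) take_cat.
by rewrite ltnNge leqW ?leq_addr //=; congr (_ ++ take _ _); lia.
Qed.

Lemma upto_sorted s j : sorted (ord_lt n) s -> j \in s -> upto j s = [seq x : 'I_n <- s | x <= j].
Proof.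
rewrite /upto; elim: s => [|x s IH] //= srt.
have /allP x_min := order_path_min ord_lt_trans srt.
rewrite in_cons eq_sym; case: (eqVneq x j) => [<- _|nx /= js].
  rewrite leqnn take0 -(filter_pred0 s); congr (_ :: _).
  by apply: eq_in_filter => y /x_min; rewrite ltnNge => /negbTE.
by rewrite IH ?(path_sorted srt) // ltnW // x_min.
Qed.

Lemma sorted_take_drop s k x y : sorted (ord_lt n) s -> x \in take k s -> y \in drop k s -> x < y.
Proof.
rewrite -{1}(cat_take_drop k s) (sorted_pairwise ord_lt_trans) pairwise_cat.
by case/and3P => /allrelP H _ _; apply: H.
Qed.

Lemma Pseq_cat s t : Pseq p (s ++ t) = Pseq p s + Pseq p t.
Proof. exact: big_cat. Qed.

Lemma Pseq_filterC (P : pred 'I_n) s :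
  Pseq p [seq x <- s | P x] + Pseq p [seq x <- s | ~~ P x] = Pseq p s.
Proof. by rewrite /Pseq !big_filter [RHS](bigID P). Qed.

Lemma Pseq_subseq s t : subseq s t -> Pseq p s <= Pseq p t.
Proof.
move=> st; rewrite /Pseq (sub_le_big_seq (op:=addn) leqnn (fun x y => leq_addr y x)) // => x.
exact: leq_count_subseq.
Qed.

Lemma Pseq_upto_le j s : Pseq p (upto j s) <= Pseq p s.
Proof. exact/Pseq_subseq/take_subseq. Qed.

Lemma Pseq_filter_mem s t : uniq s -> uniq t -> {subset t <= s} ->
  Pseq p [seq x <- s | x \in t] = Pseq p t.
Proof.
move=> us ut ts; rewrite /Pseq !big_uniq ?filter_uniq //.
by apply: eq_bigl => x; rewrite mem_filter; apply/andb_idr/ts.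
Qed.

Lemma Pseq_filter_set s (X : {set 'I_n}) : uniq s -> {subset X <= s} ->
  Pseq p [seq x <- s | x \in X] = Pset p X.
Proof.
move=> us Xs; have -> : Pset p X = Pseq p (enum X) by rewrite /Pseq big_enum.
rewrite -(Pseq_filter_mem us (enum_uniq _)).
  by congr Pseq; apply: eq_filter => x; rewrite mem_enum.
by move=> x; rewrite mem_enum => /Xs.
Qed.

Lemma p_le_pmax j : p j <= pmax p.
Proof. exact: (@leq_bigmax_cond _ xpredT (fun j => p j) j). Qed.

Lemma Pseq_le_size s : Pseq p s <= size s * pmax p.
Proof.
elim: s => [|x s IH]; first by rewrite /Pseq big_nil.
by rewrite /Pseq big_cons /= mulSn leq_add // p_le_pmax.
Qed.

End PrefixSums.

Section Schedules.
Variables (n m : nat) (p : 'I_n -> nat).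

Lemma ctime_on (s : 'I_m -> seq 'I_n) j k : j \in s k ->
  (forall k', k' != k -> j \notin s k') -> ctime p s j = Pseq p (upto j (s k)).
Proof.
move=> jk others; rewrite /ctime (bigD1 k) //= big1 ?addn0 //.
by move=> k' /andP[jk' nk']; move: (others k' nk'); rewrite jk'.
Qed.

Variable a : 'I_n -> 'I_m.

Lemma mem_proper_seq x k : (x \in proper_seq a k) = (a x == k).
Proof. by rewrite mem_enum inE. Qed.

Lemma sorted_proper_seq k : sorted (ord_lt n) (proper_seq a k).
Proof. exact: sorted_enum_set. Qed.

Lemma enum_Jij k j : enum (Jij a k j) = [seq x : 'I_n <- proper_seq a k | x <= j].
Proof.
rewrite /proper_seq /Jm /Jij /enum_mem -filter_predI.
by apply: eq_filter => x; rewrite !inE andbC.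
Qed.

Lemma Pset_Jij k j : Pset p (Jij a k j) = Pseq p [seq x : 'I_n <- proper_seq a k | x <= j].
Proof. by rewrite -enum_Jij /Pseq big_enum. Qed.

Lemma Pseq_filter_proper_le k (j : 'I_n) (P : pred 'I_n) : (forall x, P x -> x <= j) ->
  Pseq p [seq x <- proper_seq a k | P x] <= Pset p (Jij a k j).
Proof.
move=> Pj; rewrite Pset_Jij; apply: Pseq_subseq.
rewrite subseq_filter (subseq_trans (filter_subseq _ _)) ?filter_subseq // andbT.
by apply/allP => x; rewrite mem_filter => /andP[/Pj].
Qed.

Lemma Pset_Jij_split k (j1 j2 : 'I_n) : j1 <= j2 ->
  Pset p (Jij a k j2) = Pset p (Jij a k j1)
    + Pseq p [seq x : 'I_n <- [seq x : 'I_n <- proper_seq a k | j1 < x] | x <= j2].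
Proof.
move=> j12; rewrite !Pset_Jij -(Pseq_filterC p (fun x : 'I_n => x <= j1)) -!filter_predI.
by congr (Pseq p _ + Pseq p _); apply: eq_filter => x /=; lia.
Qed.

Lemma ctime_proper_upto j : ctime p (proper_seq a) j = Pseq p (upto j (proper_seq a (a j))).
Proof.
apply: ctime_on => [|k]; first by rewrite mem_proper_seq.
by rewrite mem_proper_seq eq_sym => /negbTE ->.
Qed.

Lemma ctime_proper j : ctime p (proper_seq a) j = Pset p (Jij a (a j) j).
Proof.
by rewrite ctime_proper_upto upto_sorted ?sorted_proper_seq ?mem_proper_seq // Pset_Jij.
Qed.

End Schedules.

Lemma seqmax_ub (s : seq int) y : y \in s -> (y <= seqmax s)%R.
Proof.
case: s => [|x s] //; elim: s x y => [|z s IH] x y /=; first by rewrite inE => /eqP ->.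
have top := IH (Num.max x z) _ (mem_head _ _).
rewrite !inE => /or3P[/eqP->|/eqP->|ys].
- by apply: le_trans top; rewrite le_max lexx.
- by apply: le_trans top; rewrite le_max lexx orbT.
- by apply: IH; rewrite inE ys orbT.
Qed.

Lemma seqmax_lub (s : seq int) (B : int) : s != [::] ->
  (forall y, y \in s -> y <= B)%R -> (seqmax s <= B)%R.
Proof.
case: s => [|x s] //= _; elim: s x => [|z s IH] x /= sB; first by rewrite sB ?mem_head.
apply: IH => y; rewrite inE => /orP[/eqP ->|ys].
  by rewrite ge_max !sB // !inE eqxx ?orbT.
by rewrite sB // !inE ys !orbT.
Qed.

Lemma Lmax_le (n m : nat) (p : 'I_n -> nat) (d : 'I_n -> int) (s t : 'I_m -> seq 'I_n) :
  (forall j, exists2 k, (d k <= d j)%R & ctime p s j <= ctime p t k) ->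
  (Lmax p d s <= Lmax p d t)%R.
Proof.
move=> dom; rewrite /Lmax; case E: (enum 'I_n) => [//|j0 e].
rewrite -E; apply: seqmax_lub; first by rewrite E.
move=> _ /mapP[j _ ->]; have [k dkj le_ctime] := dom j.
apply: le_trans (seqmax_ub (map_f _ (mem_enum _ k))).
by apply: lerB; rewrite ?lez_nat.
Qed.

Section Swap.
Variables (n m : nat) (p : 'I_n -> nat) (a : 'I_n -> 'I_m) (js : 'I_n) (h i : 'I_m)
  (H' I' : {set 'I_n}).
Hypotheses (p_pos : forall j, 0 < p j) (adm : admissible p a js h i)
  (sub_H : H' \subset [set x in JH p a js h]) (sub_I : I' \subset [set x in JI p a js i])
  (eq_PHI : Pset p H' = Pset p I').

Local Notation pm := (pmax p).
Local Notation jH := (JH p a js h).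
Local Notation jI := (JI p a js i).
Local Notation S := (intermediate p a js h i H' I').
Local Notation sh := (proper_seq a h).
Local Notation si := (proper_seq a i).
Local Notation Ah := [seq x : 'I_n <- sh | (x <= js) && (x \notin jH)].
Local Notation Bh := [seq x : 'I_n <- jH | x \notin H'].
Local Notation Ch := [seq x : 'I_n <- jI | x \in I'].
Local Notation Dh := [seq x : 'I_n <- sh | js < x].
Local Notation Ai := [seq x : 'I_n <- si | x <= js].
Local Notation Bi := [seq x : 'I_n <- jH | x \in H'].
Local Notation Ci := [seq x : 'I_n <- jI | x \notin I'].
Local Notation Di := [seq x : 'I_n <- si | (js < x) && (x \notin jI)].

Lemma a_js : a js = h.
Proof. by case: adm. Qed.

Lemma Delta_bound : Pset p (Jij a i js) + 4 * pm ^ 2 <= Pset p (Jij a h js).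
Proof. by case: adm => _ _; rewrite /Delta lerBrDr -PoszD lez_nat addnC. Qed.

Lemma neq_hi : h != i.
Proof.
apply/eqP => hi; have := Delta_bound; rewrite hi.
have := leq_trans (p_pos js) (p_le_pmax p js); nia.
Qed.

Lemma mem_JH x : x \in jH -> (a x == h) && (x <= js).
Proof. by move=> /mem_drop; rewrite mem_enum inE. Qed.

Lemma mem_JI x : x \in jI -> (a x == i) && (js < x).
Proof. by move=> /mem_take; rewrite mem_enum inE. Qed.

Lemma JH_H' : {subset H' <= jH}.
Proof. by move=> x /(subsetP sub_H); rewrite inE. Qed.

Lemma JI_I' : {subset I' <= jI}.
Proof. by move=> x /(subsetP sub_I); rewrite inE. Qed.

Lemma a_H' x : x \in H' -> a x = h.
Proof. by move=> /JH_H' /mem_JH /andP[/eqP]. Qed.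

Lemma a_I' x : x \in I' -> a x = i.
Proof. by move=> /JI_I' /mem_JI /andP[/eqP]. Qed.

Lemma uniq_JH : uniq jH.
Proof. by rewrite drop_uniq ?enum_uniq. Qed.

Lemma uniq_JI : uniq jI.
Proof. by rewrite take_uniq ?enum_uniq. Qed.

Lemma sorted_JH : sorted (ord_lt n) jH.
Proof. exact: (subseq_sorted (@ord_lt_trans n) (drop_subseq _ _) (sorted_enum_set _)). Qed.

Lemma Pseq_JH : Pseq p jH <= 2 * pm ^ 2.
Proof.
apply: leq_trans (Pseq_le_size _ _) _; rewrite expnS expn1 mulnA leq_mul2r.
by rewrite /JH /= size_drop; apply/orP; right; lia.
Qed.

Lemma Pseq_JI : Pseq p jI <= 2 * pm ^ 2.
Proof.
apply: leq_trans (Pseq_le_size _ _) _; rewrite expnS expn1 mulnA leq_mul2r.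
by rewrite size_take; apply/orP; right; case: ifP => // /negbT; lia.
Qed.

Lemma JH_last x y : a x = h -> x <= js -> x \notin jH -> y \in jH -> x < y.
Proof.
move=> ax xjs xnH yH; set s := enum (Jij a h js).
apply: (sorted_take_drop (sorted_enum_set _) _ yH).
have : x \in s by rewrite mem_enum inE ax eqxx xjs.
by rewrite -{1}(cat_take_drop (size s - 2 * pm) s) mem_cat (negbTE xnH) orbF.
Qed.

Lemma JI_first x y : x \in jI -> a y = i -> js < y -> y \notin jI -> x < y.
Proof.
move=> xI ay jsy ynI; set s := enum (Jafter a i js).
apply: (sorted_take_drop (sorted_enum_set _) xI).
have : y \in s by rewrite mem_enum inE ay eqxx jsy.
by rewrite -{1}(cat_take_drop (2 * pm) s) mem_cat (negbTE ynI).
Qed.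

Lemma Pset_H'_le : Pset p H' <= Pseq p jH.
Proof. by rewrite -(Pseq_filter_set p uniq_JH JH_H') Pseq_subseq ?filter_subseq. Qed.

Lemma Pseq_Bh_Ch : Pseq p Bh + Pseq p Ch = Pseq p jH.
Proof.
rewrite (Pseq_filter_set p uniq_JI JI_I') -eq_PHI -(Pseq_filter_set p uniq_JH JH_H').
by rewrite addnC Pseq_filterC.
Qed.

Lemma Pseq_Bi_Ci : Pseq p Bi + Pseq p Ci = Pseq p jI.
Proof.
rewrite (Pseq_filter_set p uniq_JH JH_H') eq_PHI -(Pseq_filter_set p uniq_JI JI_I').
exact: Pseq_filterC.
Qed.

Lemma Pseq_Ai : Pseq p Ai = Pset p (Jij a i js).
Proof. by rewrite Pset_Jij. Qed.

Lemma perm_Ah_JH : perm_eq (Ah ++ jH) [seq x : 'I_n <- sh | x <= js].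
Proof.
have -> : Ah = [seq x <- [seq x : 'I_n <- sh | x <= js] | x \notin jH].
  by rewrite -[RHS]filter_predI; apply: eq_filter => x; rewrite /= andbC.
have uE : uniq [seq x : 'I_n <- sh | x <= js] by rewrite filter_uniq ?enum_uniq.
have {2}-> : jH = [seq x <- [seq x : 'I_n <- sh | x <= js] | x \in jH].
  by apply/subseq_uniqP; rewrite // -enum_Jij drop_subseq.
by rewrite perm_catC; apply/permPl/perm_filterC.
Qed.

Lemma Pseq_Ah_JH : Pseq p Ah + Pseq p jH = Pset p (Jij a h js).
Proof. by rewrite -Pseq_cat Pset_Jij; apply: perm_big perm_Ah_JH. Qed.

Lemma Pseq_Ah_JH_upto j : j \in jH ->
  Pseq p Ah + Pseq p [seq x : 'I_n <- jH | x <= j] = Pset p (Jij a h j).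
Proof.
move=> jjH; have /andP[_ jjs] := mem_JH jjH.
have {1}-> : Ah = [seq x : 'I_n <- Ah | x <= j].
  apply/esym/all_filterP/allP => x; rewrite mem_filter mem_proper_seq.
  by case/andP=> /andP[xjs xnH] /eqP ax; apply/ltnW/(JH_last ax xjs xnH jjH).
rewrite -Pseq_cat -filter_cat Pset_Jij; apply: perm_big.
apply: perm_trans (perm_filter _ perm_Ah_JH) _; rewrite -filter_predI.
rewrite (@eq_filter _ _ (fun x : 'I_n => x <= j)) ?perm_refl // => x /=.
by apply/andb_idr => /leq_trans; apply.
Qed.

Definition swapped_machine x : 'I_m := if x \in H' then i else if x \in I' then h else a x.

Lemma intermediate_h : S h = Ah ++ Bh ++ Ch ++ Dh.
Proof. by rewrite /intermediate eqxx. Qed.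

Lemma intermediate_i : S i = Ai ++ Bi ++ Ci ++ Di.
Proof. by rewrite /intermediate eq_sym (negbTE neq_hi) eqxx. Qed.

Lemma intermediate_other k : k != h -> k != i -> S k = proper_seq a k.
Proof. by move=> /negbTE kh /negbTE ki; rewrite /intermediate kh ki. Qed.

Lemma mem_intermediate_h x : (x \in S h) = (a x == h) && (x \notin H') || (x \in I').
Proof.
rewrite intermediate_h !mem_cat !(mem_filter _ x (proper_seq _ _)) !mem_proper_seq !mem_filter.
have [xI|xnI] := boolP (x \in I'); first by rewrite JI_I' ?orbT.
have [xjH|xnjH] := boolP (x \in jH).
  by have /andP[-> xjs] := mem_JH xjH; rewrite ltnNge xjs /= andbT.
have xnH : x \notin H' by apply: contra xnjH; apply: JH_H'.
by rewrite xnH /= !andbT orbF -andb_orl ltnNge orbN.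
Qed.

Lemma mem_intermediate_i x : (x \in S i) = (a x == i) && (x \notin I') || (x \in H').
Proof.
rewrite intermediate_i !mem_cat !(mem_filter _ x (proper_seq _ _)) !mem_proper_seq !mem_filter.
have [xH|xnH] := boolP (x \in H'); first by rewrite JH_H' ?orbT.
have [xjI|xnjI] := boolP (x \in jI).
  by have /andP[-> jsx] := mem_JI xjI; rewrite leqNgt jsx /= andbT.
have xnI : x \notin I' by apply: contra xnjI; apply: JI_I'.
by rewrite xnI /= !andbT orbF -andb_orl ltnNge orbN.
Qed.

Lemma notin_I' x : a x = h -> x \notin I'.
Proof. by move=> axh; apply/negP => /a_I'; rewrite axh => /eqP; apply/negP/neq_hi. Qed.

Lemma notin_H' x : a x = i -> x \notin H'.
Proof.
by move=> axi; apply/negP => /a_H'; rewrite axi => /eqP; rewrite eq_sym; apply/negP/neq_hi.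
Qed.

Lemma mem_intermediate x k : (x \in S k) = (swapped_machine x == k).
Proof.
have ih : (i == h) = false by rewrite eq_sym (negbTE neq_hi).
rewrite /swapped_machine; have [xH|xnH] := ifPn.
  have [ax xnI] := (a_H' xH, notin_I' (a_H' xH)).
  have [->|kh] := eqVneq k h; first by rewrite mem_intermediate_h ax xH andbF (negbTE xnI) ih.
  have [->|ki] := eqVneq k i; first by rewrite mem_intermediate_i xH orbT.
  by rewrite intermediate_other // mem_proper_seq ax eq_sym (negbTE kh).
have [xI|xnI] := ifPn.
  have ax := a_I' xI.
  have [->|kh] := eqVneq k h; first by rewrite mem_intermediate_h xI orbT.
  have [->|ki] := eqVneq k i; first by rewrite mem_intermediate_i ax xI (negbTE xnH) andbF.
  by rewrite intermediate_other // mem_proper_seq ax eq_sym (negbTE ki).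
have [->|kh] := eqVneq k h; first by rewrite mem_intermediate_h xnH (negbTE xnI) andbT orbF.
have [->|ki] := eqVneq k i; first by rewrite mem_intermediate_i xnI (negbTE xnH) andbT orbF.
by rewrite intermediate_other // mem_proper_seq.
Qed.

Lemma ctime_intermediate j : ctime p S j = Pseq p (upto j (S (swapped_machine j))).
Proof. by apply: ctime_on => [|k]; rewrite mem_intermediate // eq_sym. Qed.

Lemma ctime_moved_to_i j : j \in H' -> ctime p S j <= ctime p (proper_seq a) j.
Proof.
move=> jH'; have jjH := JH_H' jH'.
have jB : j \in Bi by rewrite mem_filter jH'.
rewrite ctime_intermediate /swapped_machine jH' intermediate_i catA upto_cat_in; last first.
  by rewrite mem_cat jB orbT.
rewrite ctime_proper (a_H' jH') -(Pseq_Ah_JH_upto jjH).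
apply: leq_trans (Pseq_upto_le _ _ _) _.
rewrite Pseq_cat Pseq_Ai (Pseq_filter_set p uniq_JH JH_H').
have := Pseq_Ah_JH; have := Delta_bound; have := Pseq_JH; have := Pset_H'_le; lia.
Qed.

Lemma ctime_moved_to_h j : j \in I' -> ctime p S j <= ctime p (proper_seq a) js.
Proof.
move=> jI'; have jnH := notin_H' (a_I' jI').
rewrite ctime_intermediate /swapped_machine (negbTE jnH) jI' intermediate_h !catA.
have jC : j \in Ch by rewrite mem_filter jI' JI_I'.
rewrite upto_cat_in; last by rewrite mem_cat jC orbT.
apply: leq_trans (Pseq_upto_le _ _ _) _.
by rewrite ctime_proper a_js -Pseq_Ah_JH -Pseq_Bh_Ch !Pseq_cat addnA.
Qed.

Lemma ctime_stay_h j : a j = h -> j \notin H' -> ctime p S j <= ctime p (proper_seq a) j.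
Proof.
move=> ajh jnH; have jnI := notin_I' ajh.
rewrite ctime_intermediate /swapped_machine (negbTE jnH) (negbTE jnI) ajh intermediate_h.
rewrite ctime_proper ajh.
have srt := sorted_filter (@ord_lt_trans n) _ (sorted_proper_seq a h).
have [jjH|jnjH] := boolP (j \in jH).
  have jnA : j \notin Ah by rewrite mem_filter jjH andbF.
  have jB : j \in Bh by rewrite mem_filter jnH.
  rewrite upto_cat_notin // upto_cat_in //.
  rewrite upto_sorted ?(sorted_filter (@ord_lt_trans n) _ sorted_JH) //.
  rewrite Pseq_cat -(Pseq_Ah_JH_upto jjH) leq_add2l.
  have -> : [seq x : 'I_n <- Bh | x <= j] =
            [seq x <- [seq x : 'I_n <- jH | x <= j] | x \notin H'].
    by rewrite -!filter_predI; apply: eq_filter => x; rewrite /= andbC.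
  exact/Pseq_subseq/filter_subseq.
have [jle|jgt] := leqP j js.
  have jA : j \in Ah by rewrite mem_filter mem_proper_seq jle jnjH ajh eqxx.
  rewrite upto_cat_in // upto_sorted ?srt // -filter_predI.
  by apply: Pseq_filter_proper_le => x /andP[].
have jnABC : j \notin (Ah ++ Bh) ++ Ch.
  rewrite !mem_cat mem_filter leqNgt jgt /=.
  by rewrite mem_filter (negbTE jnjH) andbF mem_filter (negbTE jnI).
have jD : j \in Dh by rewrite mem_filter mem_proper_seq jgt ajh eqxx.
rewrite !catA upto_cat_notin // upto_sorted ?srt // !Pseq_cat -(addnA (Pseq p Ah)).
by rewrite Pseq_Bh_Ch Pseq_Ah_JH (Pset_Jij_split _ _ _ (ltnW jgt)).
Qed.

Lemma Pseq_JI_upto j : a j = i -> js < j -> j \notin jI ->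
  Pseq p jI + Pseq p [seq x : 'I_n <- Di | x <= j] =
  Pseq p [seq x : 'I_n <- [seq x : 'I_n <- si | js < x] | x <= j].
Proof.
move=> aji jsj jnjI; set T := [seq x : 'I_n <- [seq x : 'I_n <- si | js < x] | x <= j].
rewrite -(Pseq_filterC p (fun x => x \in jI) T); congr (_ + _).
  rewrite Pseq_filter_mem ?uniq_JI ?(filter_uniq _ (filter_uniq _ (enum_uniq _))) // => x xI.
  have /andP[/eqP axi jsx] := mem_JI xI.
  rewrite mem_filter (mem_filter _ x (proper_seq _ _)) mem_proper_seq jsx axi eqxx !andbT.
  exact/ltnW/(JI_first xI aji jsj jnjI).
rewrite /T -!filter_predI; congr Pseq; apply: eq_filter => x /=.
by case: (x \in jI); rewrite ?andbT ?andbF.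
Qed.

Lemma ctime_stay_i j : a j = i -> j \notin jI -> ctime p S j <= ctime p (proper_seq a) j.
Proof.
move=> aji jnjI; have jnI : j \notin I' by apply: contra jnjI; apply: JI_I'.
have jnH := notin_H' aji.
rewrite ctime_intermediate /swapped_machine (negbTE jnH) (negbTE jnI) aji intermediate_i.
rewrite ctime_proper aji.
have srt := sorted_filter (@ord_lt_trans n) _ (sorted_proper_seq a i).
have [jle|jgt] := leqP j js.
  have jA : j \in Ai by rewrite mem_filter mem_proper_seq jle aji eqxx.
  rewrite upto_cat_in // upto_sorted ?srt // -filter_predI.
  by apply: Pseq_filter_proper_le => x /andP[].
have jnABC : j \notin (Ai ++ Bi) ++ Ci.
  rewrite !mem_cat mem_filter leqNgt jgt /=.
  by rewrite mem_filter (negbTE jnH) /= mem_filter (negbTE jnjI) andbF.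
have jD : j \in Di by rewrite mem_filter mem_proper_seq jgt jnjI aji eqxx.
rewrite !catA upto_cat_notin // upto_sorted ?srt // !Pseq_cat -(addnA (Pseq p Ai)).
rewrite Pseq_Bi_Ci Pseq_Ai (Pset_Jij_split _ _ _ (ltnW jgt)) -addnA leq_add2l.
by rewrite Pseq_JI_upto.
Qed.

Lemma ctime_left_in_JI j : j \in jI -> j \notin I' -> ctime p S j <= ctime p (proper_seq a) js.
Proof.
move=> jjI jnI; have /andP[/eqP aji _] := mem_JI jjI.
have jC : j \in Ci by rewrite mem_filter jnI.
rewrite ctime_intermediate /swapped_machine (negbTE (notin_H' aji)) (negbTE jnI) aji.
rewrite intermediate_i !catA upto_cat_in; last by rewrite mem_cat jC orbT.
apply: leq_trans (Pseq_upto_le _ _ _) _.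
rewrite !Pseq_cat -(addnA (Pseq p Ai)) Pseq_Bi_Ci Pseq_Ai ctime_proper a_js.
have := Delta_bound; have := Pseq_JI; lia.
Qed.

Lemma ctime_unmoved j : a j != h -> a j != i -> ctime p S j = ctime p (proper_seq a) j.
Proof.
move=> ajh aji; rewrite ctime_intermediate /swapped_machine.
have jnH : j \notin H' by apply: contra ajh => /a_H' ->.
have jnI : j \notin I' by apply: contra aji => /a_I' ->.
by rewrite (negbTE jnH) (negbTE jnI) intermediate_other // ctime_proper_upto.
Qed.

Lemma intermediate_dominated (j : 'I_n) :
  exists2 k : 'I_n, k <= j & ctime p S j <= ctime p (proper_seq a) k.
Proof.
have [jH'|jnH] := boolP (j \in H'); first by exists j => //; apply: ctime_moved_to_i.
have [jI'|jnI] := boolP (j \in I').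
  have /andP[_ /ltnW jsj] := mem_JI (JI_I' jI').
  by exists js => //; apply: ctime_moved_to_h.
have [ajh|ajh] := eqVneq (a j) h; first by exists j => //; apply: ctime_stay_h.
have [aji|aji] := eqVneq (a j) i; last by exists j; rewrite ?ctime_unmoved.
have [jjI|jnjI] := boolP (j \in jI); last by exists j => //; apply: ctime_stay_i.
have /andP[_ /ltnW jsj] := mem_JI jjI.
by exists js => //; apply: ctime_left_in_JI.
Qed.

End Swap.

Theorem lemma7 (n m : nat) (p : 'I_n -> nat) (d : 'I_n -> int)
    (p_pos : forall j, 0 < p j)
    (d_sorted : forall j k : 'I_n, j <= k -> (d j <= d k)%R)
    (a : 'I_n -> 'I_m) (js : 'I_n) (h i : 'I_m)
    (adm : admissible p a js h i)
    (H' I' : {set 'I_n})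
    (sub_H : H' \subset [set x in JH p a js h])
    (sub_I : I' \subset [set x in JI p a js i])
    (ne_H : H' != set0) (ne_I : I' != set0)
    (eqP : Pset p H' = Pset p I') :
  (Lmax p d (intermediate p a js h i H' I') <= Lmax p d (proper_seq a))%R.
Proof.
apply: Lmax_le => j.
have [k kj dom] := intermediate_dominated p_pos adm sub_H sub_I eqP j.
by exists k => //; apply: d_sorted.
Qed.
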